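(* Let $\gamma\in[0,1)$, $\lambda\ge0$, let $V$ be the value function defined in the context, and let $V_{CQL}$ be the unique bounded fixed point of the CQL Bellman backup $B_{CQL}$ defined in the context. Then $$V(x)-\frac{\lambda}{1-\gamma}\le V_{CQL}(x)\le V(x)-\lambda\quad\text{for all }x\in\mathbb{R}^n.$$
   Context: Setting: States $x\in\mathbb{R}^n$; compact sets $\mathcal{U}\subseteq\mathbb{R}^m$ (controls) and $\mathcal{D}\subseteq\mathbb{R}^\ell$ (disturbances); dynamics $f:\mathbb{R}^n\times\mathcal{U}\times\mathcal{D}\to\mathbb{R}^n$, Lipschitz continuous in the state. For sequences $\mathbf{u}=\{u_t\}_{t\ge0}\subset\mathcal{U}$, $\mathbf{d}=\{d_t\}_{t\ge0}\subset\mathcal{D}$, the trajectory is $\xi_x^{\mathbf{u},\mathbf{d}}(0)=x$, $\xi_x^{\mathbf{u},\mathbf{d}}(t+1)=f(\xi_x^{\mathbf{u},\mathbf{d}}(t),u_t,d_t)$ for $t\in\mathbb{Z}_+$. Let $r,c:\mathbb{R}^n\to\mathbb{R}$ be bounded Lipschitz continuous functions. A map $\phi$ from control sequences to disturbance sequences is a non-anticipative strategy if whenever $u_t=\bar u_t$ for all $t\in\{0,\dots,T\}$, then $\phi(\mathbf{u})_t=\phi(\bar{\mathbf{u}})_t$ for all $t\in\{0,\dots,T\}$; $\Phi$ is the set of all such strategies. Value function: $$V(x)=\inf_{\phi\in\Phi}\ \sup_{\mathbf{u}}\ \sup_{t\in\mathbb{Z}_+}\ \min\Big\{\gamma^t r\big(\xi_x^{\mathbf{u},\phi(\mathbf{u})}(t)\big),\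 \min_{\tau=0,\dots,t}\gamma^\tau c\big(\xi_x^{\mathbf{u},\phi(\mathbf{u})}(\tau)\big)\Big\}$$ (the paper writes $\max_{\mathbf{u}}$ over control sequences). Bellman backup, for bounded $U:\mathbb{R}^n\to\mathbb{R}$: $B[U](x)=\min\{c(x),\max\{r(x),\gamma\max_{u\in\mathcal{U}}\min_{d\in\mathcal{D}}U(f(x,u,d))\}\}$. CQL Bellman backup: $B_{CQL}[U](x)=B[U](x)-\lambda$; this is a $\gamma$-contraction in the sup norm on bounded functions, and $V_{CQL}$ denotes its unique bounded fixed point (the limit of the iteration $V^{(k+1)}=B_{CQL}[V^{(k)}]$ from any bounded initial function). *)

From HB Require Import structures.
From mathcomp Require Import all_boot all_order all_algebra.
From mathcomp Require Import all_classical all_reals all_analysis.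
Set Implicit Arguments. Unset Strict Implicit. Unset Printing Implicit Defensive.
Import Order.TTheory GRing.Theory Num.Theory.
Import numFieldNormedType.Exports.
Local Open Scope classical_set_scope.
Local Open Scope ring_scope.

Section Game.
Variables (R : realType) (n m l : nat).
Notation X := 'rV[R]_n.
Notation Uv := 'rV[R]_m.
Notation Dv := 'rV[R]_l.

Fixpoint traj (f : X -> Uv -> Dv -> X) (x : X) (u : nat -> Uv) (d : nat -> Dv)
  (t : nat) : X :=
  match t with
  | 0%N => x
  | t'.+1 => f (traj f x u d t') (u t') (d t')
  end.

Fixpoint run_min (gamma : R) (c : X -> R) (xi : nat -> X) (t : nat) : R :=
  match t with
  | 0%N => c (xi 0%N)
  | t'.+1 => Num.min (run_min gamma c xi t') (gamma ^+ t'.+1 * c (xi t'.+1))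
  end.

Definition payoff (gamma : R) (r c : X -> R) (f : X -> Uv -> Dv -> X)
  (x : X) (u : nat -> Uv) (d : nat -> Dv) : R :=
  sup [set Num.min (gamma ^+ t * r (traj f x u d t))
                   (run_min gamma c (traj f x u d) t) | t in [set: nat]].

Definition ctrl_seqs (U : set Uv) : set (nat -> Uv) :=
  [set u | forall t, U (u t)].

Definition nonanticipative (U : set Uv) (D : set Dv) :
  set ((nat -> Uv) -> (nat -> Dv)) :=
  [set phi | (forall u, ctrl_seqs U u -> forall t, D (phi u t)) /\
     (forall u ubar T, ctrl_seqs U u -> ctrl_seqs U ubar ->
        (forall t, (t <= T)%N -> u t = ubar t) ->
        forall t, (t <= T)%N -> phi u t = phi ubar t)].

Definition value (gamma : R) (U : set Uv) (D : set Dv)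
  (f : X -> Uv -> Dv -> X) (r c : X -> R) (x : X) : R :=
  inf [set sup [set payoff gamma r c f x u (phi u) | u in ctrl_seqs U]
       | phi in nonanticipative U D].

Definition bellman (gamma : R) (U : set Uv) (D : set Dv)
  (f : X -> Uv -> Dv -> X) (r c : X -> R) (W : X -> R) (x : X) : R :=
  Num.min (c x) (Num.max (r x)
    (gamma * sup [set inf [set W (f x u d) | d in D] | u in U])).

Definition bellman_cql (gamma lam : R) (U : set Uv) (D : set Dv)
  (f : X -> Uv -> Dv -> X) (r c : X -> R) (W : X -> R) (x : X) : R :=
  bellman gamma U D f r c W x - lam.

Definition sup_bounded (T : Type) (g : T -> R) : Prop :=
  exists M : R, forall y, `|g y| <= M.

Definition lipschitz_fun (g : X -> R) : Prop :=
  exists L : R, forall x y, `|g x - g y| <= L * `|x - y|.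

Definition lipschitz_in_state (U : set Uv) (D : set Dv)
  (f : X -> Uv -> Dv -> X) : Prop :=
  exists L : R, forall x y u d, U u -> D d ->
    `|f x u d - f y u d| <= L * `|x - y|.

End Game.

From HB Require Import structures.
From mathcomp Require Import all_boot all_order all_algebra.
From mathcomp Require Import all_classical all_reals all_analysis.
From mathcomp Require Import lra.
Import Order.TTheory GRing.Theory Num.Theory.
Import numFieldNormedType.Exports.
Local Open Scope classical_set_scope.
Local Open Scope ring_scope.
Set Implicit Arguments. Unset Strict Implicit.

(* The value function satisfies the dynamic programming principle V = B[V]:
   splitting off the first move of a play gives the recursion
   payoff = min (c x) (max (r x) (gamma * payoff of the remaining play)), and
   non-anticipative strategies can be split and concatenated at the first move.
   The backup B is monotone and B[W + b] <= B[W] + max (gamma b) 0.  So if e is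
   the supremum of V - V_CQL, then V = B[V] <= B[V_CQL] + max (gamma e) 0
   = V_CQL + lam + max (gamma e) 0, whence e <= lam + max (gamma e) 0, i.e.
   e <= lam / (1 - gamma); symmetrically the supremum e' of V_CQL - V satisfies
   e' <= - lam + max (gamma e') 0, i.e. e' <= - lam. *)

Ltac minmax_cases :=
  rewrite ?minEle ?maxEle;
  repeat match goal with |- context [if ?a <= ?b then _ else _] => case: (leP a b) end;
  move=> *.

Section ImageSupInf.
Context {R : realType} {T : Type} (A : set T) (F : T -> R).

Lemma sup_image_le b :
  A !=set0 -> (forall a, A a -> F a <= b) -> sup [set F a | a in A] <= b.
Proof.
move=> [a Aa] Fb; apply: ge_sup; first by exists (F a), a.
by move=> _ [a' Aa' <-]; exact: Fb.
Qed.

Lemma le_sup_image M a :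
  (forall a, A a -> F a <= M) -> A a -> F a <= sup [set F a | a in A].
Proof.
move=> FM Aa; apply: ub_le_sup; last by exists a.
by exists M => _ [a' Aa' <-]; exact: FM.
Qed.

Lemma inf_image_ge b :
  A !=set0 -> (forall a, A a -> b <= F a) -> b <= inf [set F a | a in A].
Proof.
move=> [a Aa] bF; apply: lb_le_inf; first by exists (F a), a.
by move=> _ [a' Aa' <-]; exact: bF.
Qed.

Lemma inf_image_le M a :
  (forall a, A a -> M <= F a) -> A a -> inf [set F a | a in A] <= F a.
Proof.
move=> MF Aa; apply: ge_inf; last by exists a.
by exists M => _ [a' Aa' <-]; exact: MF.
Qed.

Lemma norm_sup_image_le M :
  A !=set0 -> (forall a, A a -> `|F a| <= M) -> `|sup [set F a | a in A]| <= M.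
Proof.
move=> [a Aa] FM; rewrite ler_norml; apply/andP; split.
- apply: le_trans (lerNnormlW (FM a Aa)) _.
  by apply: (le_sup_image (M := M)) => // a' /FM /ler_normlW.
- by apply: sup_image_le; [exists a | move=> a' /FM /ler_normlW].
Qed.

Lemma norm_inf_image_le M :
  A !=set0 -> (forall a, A a -> `|F a| <= M) -> `|inf [set F a | a in A]| <= M.
Proof.
move=> [a Aa] FM; rewrite ler_norml; apply/andP; split.
- by apply: inf_image_ge; [exists a | move=> a' /FM /lerNnormlW].
- apply: le_trans (ler_normlW (FM a Aa)).
  by apply: (inf_image_le (M := - M)) => // a' /FM /lerNnormlW.
Qed.

Lemma inf_image_lt_add (e : R) :
  A !=set0 -> 0 < e -> exists a, A a /\ F a < inf [set F a | a in A] + e.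
Proof.
move=> [a Aa] e0; have : inf [set F a | a in A] < inf [set F a | a in A] + e.
  by rewrite ltrDl.
by case/inf_lt; [exists (F a), a | move=> _ [a' Aa' <-] ?; exists a'].
Qed.

End ImageSupInf.

Definition backup (R : realType) (gamma cx rx z : R) : R :=
  Num.min cx (Num.max rx (gamma * z)).

Section Backup.
Context {R : realType} (gamma cx rx : R).
Hypothesis gamma_ge0 : 0 <= gamma.

Lemma ler_backup z1 z2 : z1 <= z2 -> backup gamma cx rx z1 <= backup gamma cx rx z2.
Proof.
move=> z12; have : gamma * z1 <= gamma * z2 by rewrite ler_wpM2l.
rewrite /backup; minmax_cases; lra.
Qed.

Lemma backup_addr_le z b :
  backup gamma cx rx (z + b) <= backup gamma cx rx z + Num.max (gamma * b) 0.
Proof. rewrite /backup mulrDr; minmax_cases; lra. Qed.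

Lemma backup_sup_le (T : Type) (A : set T) (F : T -> R) (M s : R) :
  A !=set0 -> (forall a, A a -> F a <= M) ->
  (forall a, A a -> backup gamma cx rx (F a) <= s) ->
  backup gamma cx rx (sup [set F a | a in A]) <= s.
Proof.
rewrite /backup => -[a0 Aa0] FM Fs.
have [cs|sc] := leP cx s; first by rewrite ge_min cs.
have rFs a : A a -> rx <= s /\ gamma * F a <= s by move/Fs; move: sc; minmax_cases; lra.
rewrite ge_min ge_max (rFs a0 Aa0).1 /=; apply/orP; right.
have [gamma0|gamma_neq0] := eqVneq gamma 0.
  by move: (rFs a0 Aa0).2; rewrite gamma0 !mul0r.
have gamma_gt0 : 0 < gamma by rewrite lt_def gamma_neq0.
rewrite -ler_pdivlMl //; apply: sup_image_le; first by exists a0.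
by move=> a Aa; rewrite ler_pdivlMl //; case: (rFs a Aa).
Qed.

End Backup.

Definition stail (T : Type) (u : nat -> T) : nat -> T := fun t => u t.+1.

Definition scons (T : Type) (a : T) (u : nat -> T) : nat -> T :=
  fun t => if t is t'.+1 then u t' else a.

Section Game.
Variables (R : realType) (n m l : nat).
Notation X := 'rV[R]_n.
Notation Uv := 'rV[R]_m.
Notation Dv := 'rV[R]_l.
Notation strategy := ((nat -> Uv) -> nat -> Dv).
Variables (gamma M : R) (U : set Uv) (D : set Dv) (f : X -> Uv -> Dv -> X) (r c : X -> R).
Hypotheses (gamma_ge0 : 0 <= gamma) (gamma_le1 : gamma <= 1).
Hypotheses (r_bound : forall z, `|r z| <= M) (c_bound : forall z, `|c z| <= M).
Hypotheses (U0 : U !=set0) (D0 : D !=set0).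

Definition minimax (W : X -> R) (x : X) : R :=
  sup [set inf [set W (f x u d) | d in D] | u in U].

Lemma bellmanE W x : bellman gamma U D f r c W x = backup gamma (c x) (r x) (minimax W x).
Proof. by []. Qed.

Lemma inf_le_minimax x W u0 :
  sup_bounded W -> U u0 -> inf [set W (f x u0 d) | d in D] <= minimax W x.
Proof.
move=> [MW Wb]; apply: (le_sup_image (F := fun u => inf [set W (f x u d) | d in D]) (M := MW)).
by move=> u _; apply/ler_normlW/norm_inf_image_le.
Qed.

Lemma minimax_le_addr W1 W2 a x : sup_bounded W1 -> sup_bounded W2 ->
  (forall z, W1 z <= W2 z + a) -> minimax W1 x <= minimax W2 x + a.
Proof.
move=> [M1 W1b] W2b W12; apply: sup_image_le U0 _ => u Uu.
apply: (@le_trans _ _ (inf [set W2 (f x u d) | d in D] + a)); last first.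
  by rewrite lerD2r; exact: inf_le_minimax.
rewrite -lerBlDr; apply: inf_image_ge D0 _ => d Dd; rewrite lerBlDr.
apply: le_trans (W12 _); apply: (inf_image_le (M := - M1)) Dd => d' _.
exact/lerNnormlW.
Qed.

Lemma bellman_le_addr W1 W2 a x : sup_bounded W1 -> sup_bounded W2 ->
  (forall z, W1 z <= W2 z + a) ->
  bellman gamma U D f r c W1 x <= bellman gamma U D f r c W2 x + Num.max (gamma * a) 0.
Proof.
move=> W1b W2b W12; rewrite !bellmanE.
apply: le_trans (backup_addr_le _ _ _ _ a).
exact/ler_backup/minimax_le_addr.
Qed.

Lemma traj_stail x u d t :
  traj f x u d t.+1 = traj f (f x (u 0%N) (d 0%N)) (stail u) (stail d) t.
Proof.
by elim: t => [//|t IH]; rewrite -[LHS]/(f (traj f x u d t.+1) (u t.+1) (d t.+1)) IH.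
Qed.

Lemma run_min_stail x u d t :
  run_min gamma c (traj f x u d) t.+1 =
  Num.min (c x) (gamma * run_min gamma c (traj f (f x (u 0%N) (d 0%N)) (stail u) (stail d)) t).
Proof.
elim: t => [|t IH]; first by rewrite /= expr1.
rewrite -[LHS]/(Num.min (run_min gamma c (traj f x u d) t.+1)
  (gamma ^+ t.+2 * c (traj f x u d t.+2))) IH.
by rewrite [run_min _ _ _ t.+1]/= minr_pMr // traj_stail exprS -mulrA minA.
Qed.

Definition stage_value x u d t :=
  Num.min (gamma ^+ t * r (traj f x u d t)) (run_min gamma c (traj f x u d) t).

Lemma payoffE x u d : payoff gamma r c f x u d = sup [set stage_value x u d t | t in setT].
Proof. by []. Qed.

Lemma stage_value0 x u d : stage_value x u d 0 = Num.min (r x) (c x).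
Proof. by rewrite /stage_value /= expr0 mul1r. Qed.

Lemma stage_value_stail x u d t :
  stage_value x u d t.+1 =
  Num.min (c x) (gamma * stage_value (f x (u 0%N) (d 0%N)) (stail u) (stail d) t).
Proof.
by rewrite /stage_value run_min_stail traj_stail exprS -mulrA minr_pMr // minCA.
Qed.

Lemma norm_discounted_le k a : `|a| <= M -> `|gamma ^+ k * a| <= M.
Proof.
move=> aM; rewrite normrM ger0_norm ?exprn_ge0 //.
by apply: le_trans aM; rewrite ler_piMl // exprn_ile1.
Qed.

Lemma norm_run_min_le xi t : `|run_min gamma c xi t| <= M.
Proof.
elim: t => [|t IH] /=; first exact: c_bound.
by rewrite minEle; case: ifP => // _; exact: norm_discounted_le.
Qed.

Lemma norm_stage_value_le x u d t : `|stage_value x u d t| <= M.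
Proof.
rewrite /stage_value minEle; case: ifP => _; last exact: norm_run_min_le.
exact: norm_discounted_le.
Qed.

Lemma norm_payoff_le x u d : `|payoff gamma r c f x u d| <= M.
Proof.
rewrite payoffE; apply: norm_sup_image_le => [|t _]; first by exists 0%N.
exact: norm_stage_value_le.
Qed.

Lemma stage_value_le_payoff x u d t : stage_value x u d t <= payoff gamma r c f x u d.
Proof.
rewrite payoffE; apply: (le_sup_image (M := M)) => // t' _.
exact/ler_normlW/norm_stage_value_le.
Qed.

Lemma payoff_first_step x u d :
  payoff gamma r c f x u d =
  backup gamma (c x) (r x) (payoff gamma r c f (f x (u 0%N) (d 0%N)) (stail u) (stail d)).
Proof.
set y := f x (u 0%N) (d 0%N).
apply/le_anti/andP; split.
- rewrite [leLHS]payoffE; apply: sup_image_le; first by exists 0%N.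
  move=> [|t] _; first by rewrite stage_value0 /backup; minmax_cases; lra.
  rewrite stage_value_stail -/y.
  move: (stage_value_le_payoff y (stail u) (stail d) t) => /(ler_wpM2l gamma_ge0).
  by rewrite /backup; minmax_cases; lra.
- rewrite [payoff _ _ _ _ y _ _]payoffE.
  apply: (backup_sup_le gamma_ge0 (M := M)) => // t _.
    exact/ler_normlW/norm_stage_value_le.
  have := stage_value_le_payoff x u d 0; have := stage_value_le_payoff x u d t.+1.
  by rewrite stage_value0 stage_value_stail -/y /backup; minmax_cases; lra.
Qed.

Definition strategy_cost x (phi : strategy) : R :=
  sup [set payoff gamma r c f x u (phi u) | u in ctrl_seqs U].

Local Notation V := (value gamma U D f r c).

Lemma valueE x : V x = inf [set strategy_cost x phi | phi in nonanticipative U D].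
Proof. by []. Qed.

Lemma ctrl_seqs_neq0 : ctrl_seqs U !=set0.
Proof. by case: U0 => u0 Uu0; exists (fun=> u0). Qed.

Lemma nonanticipative_neq0 : nonanticipative U D !=set0.
Proof. by case: D0 => d0 Dd0; exists (fun _ _ => d0); split. Qed.

Lemma ctrl_seqs_stail u : ctrl_seqs U u -> ctrl_seqs U (stail u).
Proof. by move=> Uu t; exact: Uu. Qed.

Lemma ctrl_seqs_scons u0 u : U u0 -> ctrl_seqs U u -> ctrl_seqs U (scons u0 u).
Proof. by move=> Uu0 Uu t; case: t. Qed.

Lemma nonanticipative_first_move phi u0 u u' :
  nonanticipative U D phi -> U u0 -> ctrl_seqs U u -> ctrl_seqs U u' ->
  phi (scons u0 u) 0%N = phi (scons u0 u') 0%N.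
Proof.
move=> [_ phiNA] Uu0 Uu Uu'.
by apply: (phiNA _ _ 0%N) => //; [exact: ctrl_seqs_scons.. | case].
Qed.

Lemma nonanticipative_residual phi u0 :
  nonanticipative U D phi -> U u0 ->
  nonanticipative U D (fun u => stail (phi (scons u0 u))).
Proof.
move=> [phiD phiNA] Uu0; split=> [u Uu t|u u' T Uu Uu' uu' t tT].
  exact/phiD/ctrl_seqs_scons.
apply: (phiNA _ _ T.+1) => //; [exact: ctrl_seqs_scons.. | by case=> //= s /uu'].
Qed.

Lemma nonanticipative_scons x (d0 : Uv -> Dv) (ps : X -> strategy) :
  (forall u0, U u0 -> D (d0 u0)) -> (forall z, nonanticipative U D (ps z)) ->
  nonanticipative U D
    (fun u => scons (d0 (u 0%N)) (ps (f x (u 0%N) (d0 (u 0%N))) (stail u))).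
Proof.
move=> d0D psNA; split=> [u Uu [|t]|u u' T Uu Uu' uu' [|t] tT] /=.
- exact: d0D.
- by apply: (psNA _).1; exact: ctrl_seqs_stail.
- by rewrite uu'.
case: T tT uu' => [//|T] tT uu'; rewrite -uu' //.
apply: ((psNA _).2 _ _ T) => //; [exact: ctrl_seqs_stail.. | by move=> s sT; exact: uu'].
Qed.

Lemma norm_strategy_cost_le x phi : `|strategy_cost x phi| <= M.
Proof. by apply: norm_sup_image_le ctrl_seqs_neq0 _ => u _; exact: norm_payoff_le. Qed.

Lemma norm_value_le x : `|V x| <= M.
Proof.
rewrite valueE; apply: norm_inf_image_le nonanticipative_neq0 _ => phi _.
exact: norm_strategy_cost_le.
Qed.

Lemma payoff_le_strategy_cost x phi u :
  ctrl_seqs U u -> payoff gamma r c f x u (phi u) <= strategy_cost x phi.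
Proof.
apply: (le_sup_image (F := fun u => payoff gamma r c f x u (phi u)) (M := M)) => u' _.
exact/ler_normlW/norm_payoff_le.
Qed.

Lemma value_le_strategy_cost x phi : nonanticipative U D phi -> V x <= strategy_cost x phi.
Proof.
rewrite valueE; apply: (inf_image_le (M := - M)) => psi _.
exact/lerNnormlW/norm_strategy_cost_le.
Qed.

Lemma value_bounded : sup_bounded V.
Proof. by exists M; exact: norm_value_le. Qed.

Lemma backup_minimax_value_le_cost x phi :
  nonanticipative U D phi -> backup gamma (c x) (r x) (minimax V x) <= strategy_cost x phi.
Proof.
move=> phiNA; apply: (backup_sup_le gamma_ge0 (M := M)) => // [u0 _|u0 Uu0].
  by apply/ler_normlW/norm_inf_image_le => // d _; exact: norm_value_le.
have Uconst : ctrl_seqs U (fun=> u0) by [].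
set d0 := phi (scons u0 (fun=> u0)) 0%N.
have Dd0 : D d0 by apply: phiNA.1; exact: ctrl_seqs_scons.
set phi' := fun u => stail (phi (scons u0 u)).
have phi'NA : nonanticipative U D phi' by exact: nonanticipative_residual.
have cost_le : backup gamma (c x) (r x) (strategy_cost (f x u0 d0) phi') <= strategy_cost x phi.
  apply: (backup_sup_le gamma_ge0 (M := M)) => //; first exact: ctrl_seqs_neq0.
    by move=> u _; exact/ler_normlW/norm_payoff_le.
  move=> u Uu; rewrite /d0 -(nonanticipative_first_move phiNA Uu0 Uu Uconst).
  rewrite -[backup _ _ _ _](payoff_first_step x (scons u0 u)).
  exact/payoff_le_strategy_cost/ctrl_seqs_scons.
apply: le_trans cost_le; apply: ler_backup => //.
apply: le_trans (value_le_strategy_cost _ phi'NA).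
by apply: (inf_image_le (M := - M)) Dd0 => d _; exact/lerNnormlW/norm_value_le.
Qed.

Lemma backup_minimax_value_le x : backup gamma (c x) (r x) (minimax V x) <= V x.
Proof.
rewrite valueE; apply: inf_image_ge nonanticipative_neq0 _ => phi phiNA.
exact: backup_minimax_value_le_cost.
Qed.

(* Play an (e/2)-optimal first disturbance, then an (e/2)-optimal strategy from
   the state it leads to. *)
Lemma value_le_backup_minimax_add x e : 0 < e ->
  V x <= backup gamma (c x) (r x) (minimax V x + e).
Proof.
move=> e0; have e20 : 0 < e / 2 by rewrite divr_gt0.
have [d0 d0_opt] := choice (fun u0 =>
  inf_image_lt_add (fun d => V (f x u0 d)) D0 e20).
have [ps ps_opt] := choice (fun z =>
  inf_image_lt_add (strategy_cost z) nonanticipative_neq0 e20).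
have phiNA := nonanticipative_scons x (fun u0 _ => (d0_opt u0).1) (fun z => (ps_opt z).1).
apply: le_trans (value_le_strategy_cost _ phiNA) _.
apply: sup_image_le ctrl_seqs_neq0 _ => u Uu.
rewrite payoff_first_step; apply: ler_backup => //=.
set y := f x (u 0%N) (d0 (u 0%N)).
have := payoff_le_strategy_cost y (ps y) (ctrl_seqs_stail Uu).
have := (ps_opt y).2; rewrite -valueE.
have := (d0_opt (u 0%N)).2; have := inf_le_minimax x value_bounded (Uu 0%N).
rewrite -/y; lra.
Qed.

Lemma value_le_backup_minimax x : V x <= backup gamma (c x) (r x) (minimax V x).
Proof.
apply/ler_addgt0Pr => e e0.
have := value_le_backup_minimax_add x e0.
have := backup_addr_le gamma (c x) (r x) (minimax V x) e.
have : gamma * e <= e by rewrite ler_piMl // ltW.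
minmax_cases; lra.
Qed.

Lemma value_bellman x : V x = bellman gamma U D f r c V x.
Proof.
by rewrite bellmanE; apply/le_anti; rewrite value_le_backup_minimax backup_minimax_value_le.
Qed.

End Game.

Section ContractionGap.
Context {R : realType} (gamma a : R).
Hypotheses (gamma_ge0 : 0 <= gamma) (gamma_lt1 : gamma < 1).

Lemma exists_self_bounding_gap (T : Type) (F G : T -> R) (z0 : T) :
  sup_bounded F -> sup_bounded G ->
  (forall b, (forall z, F z <= G z + b) ->
     forall z, F z <= G z + (a + Num.max (gamma * b) 0)) ->
  exists e, (forall z, F z <= G z + e) /\ e <= a + Num.max (gamma * e) 0.
Proof.
move=> [MF Fb] [MG Gb] F_shift.
set e := sup [set F z - G z | z in setT].
have gap_le z : F z <= G z + e.
  rewrite -lerBlDl; apply: (le_sup_image (F := fun z => F z - G z) (M := MF + MG)) => // z' _.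
  by have := ler_normlW (Fb z'); have := lerNnormlW (Gb z'); lra.
exists e; split => //; apply: sup_image_le; first by exists z0.
by move=> z _; have := F_shift e gap_le z; lra.
Qed.

Lemma self_bounding_gap_le_div e :
  0 <= a -> e <= a + Num.max (gamma * e) 0 -> e <= a / (1 - gamma).
Proof.
move=> a_ge0; rewrite ler_pdivlMr ?subr_gt0 //.
move: gamma_ge0 gamma_lt1 a_ge0; minmax_cases; nra.
Qed.

Lemma self_bounding_gap_le e :
  a <= 0 -> e <= a + Num.max (gamma * e) 0 -> e <= a.
Proof. move: gamma_ge0 gamma_lt1; minmax_cases; nra. Qed.

End ContractionGap.

Theorem theorem4 (R : realType) (n m l : nat)
  (U : set 'rV[R]_m) (D : set 'rV[R]_l)
  (f : 'rV[R]_n -> 'rV[R]_m -> 'rV[R]_l -> 'rV[R]_n)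
  (r c : 'rV[R]_n -> R) (gamma lam : R) :
  compact U -> U !=set0 -> compact D -> D !=set0 ->
  lipschitz_in_state U D f ->
  sup_bounded r -> lipschitz_fun r ->
  sup_bounded c -> lipschitz_fun c ->
  0 <= gamma -> gamma < 1 -> 0 <= lam ->
  forall V_CQL : 'rV[R]_n -> R,
    sup_bounded V_CQL ->
    (forall x, V_CQL x = bellman_cql gamma lam U D f r c V_CQL x) ->
    forall x : 'rV[R]_n,
      value gamma U D f r c x - lam / (1 - gamma) <= V_CQL x /\
      V_CQL x <= value gamma U D f r c x - lam.
Proof.
move=> _ U0 _ D0 _ [Mr r_bound] _ [Mc c_bound] _ gamma_ge0 gamma_lt1 lam_ge0 W W_bounded W_fix x.
have rM z : `|r z| <= Num.max Mr Mc by rewrite le_max r_bound.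
have cM z : `|c z| <= Num.max Mr Mc by rewrite le_max c_bound orbT.
have gamma_le1 := ltW gamma_lt1.
have V_bounded := value_bounded f gamma_ge0 gamma_le1 rM cM U0 D0.
have V_fix := value_bellman f gamma_ge0 gamma_le1 rM cM U0 D0.
set V := value gamma U D f r c in V_bounded V_fix *.
have [e [VW e_le]] : exists e, (forall z, V z <= W z + e) /\ e <= lam + Num.max (gamma * e) 0.
  apply: (exists_self_bounding_gap x V_bounded W_bounded) => b VW z.
  rewrite (V_fix z) (W_fix z) /bellman_cql.
  by have := bellman_le_addr f r c gamma_ge0 U0 D0 z V_bounded W_bounded VW; lra.
have [e' [WV e'_le]] : exists e, (forall z, W z <= V z + e) /\ e <= - lam + Num.max (gamma * e) 0.
  apply: (exists_self_bounding_gap x W_bounded V_bounded) => b WV z.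
  rewrite (V_fix z) (W_fix z) /bellman_cql.
  by have := bellman_le_addr f r c gamma_ge0 U0 D0 z W_bounded V_bounded WV; lra.
have := self_bounding_gap_le_div gamma_ge0 gamma_lt1 lam_ge0 e_le.
have nlam_le0 : - lam <= 0 by rewrite oppr_le0.
have := self_bounding_gap_le gamma_ge0 gamma_lt1 nlam_le0 e'_le.
have := VW x; have := WV x; lra.
Qed.
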